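(* In the setting described in the context, let $u_1=\min\{x\in[d,v]: f^{2}(x)=d\}$, $\breve u_0'=\max\{x\in[u_1,v]: f^2(x)=d\}$, and for $n\ge1$ let $\breve\mu_{m,n}=\min\{x\in[\breve u_0',v]: f^{m+2n}(x)=d\}$ (these sets are nonempty). Then for each $n\ge1$, every periodic point of $f$ in $[\breve u_0',\breve\mu_{m,n}]$ whose least period is odd has least period $\ge m+2n$.
   Context: Let $I$ be a compact interval and $f:I\to I$ continuous; $f^1=f$, $f^n=f\circ f^{n-1}$. A point $x_0$ is a periodic point of least period $k$ (a period-$k$ point) if $f^k(x_0)=x_0$ and $f^i(x_0)\ne x_0$ for $0<i<k$. Let $m\ge3$ be odd and let $P$ be a periodic orbit of $f$ of least period $m$. Put $e=f^{m-1}(\min P)$. Let $v\in[\min P,e)$ be a point with $f(v)=e$, and let $z\in(v,e)$ be a fixed point of $f$ (such points exist). Define $z_0=\min\{x\in[v,z]: f^2(x)=x\}$ and $d=\max\{x\in[\min P,v]: f^2(x)=z_0\}$ (both sets are nonempty). *)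

From Stdlib Require Import Reals Lia.
Open Scope R_scope.

Fixpoint iter (f : R -> R) (n : nat) (x : R) : R :=
  match n with
  | O => x
  | S n' => f (iter f n' x)
  end.

Definition least_period (f : R -> R) (k : nat) (x : R) : Prop :=
  (0 < k)%nat /\ iter f k x = x /\
  (forall i : nat, (0 < i < k)%nat -> iter f i x <> x).

Definition cont_on (a b : R) (f : R -> R) : Prop :=
  forall x, a <= x <= b -> forall eps, 0 < eps ->
    exists delta, 0 < delta /\
      forall y, a <= y <= b -> Rabs (y - x) < delta -> Rabs (f y - f x) < eps.

Definition is_min_of (S : R -> Prop) (x : R) : Prop :=
  S x /\ forall y, S y -> x <= y.

Definition is_max_of (S : R -> Prop) (x : R) : Prop :=
  S x /\ forall y, S y -> y <= x.

From Stdlib Require Import Reals Lra Lia.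
Open Scope R_scope.

(* Put p = f^2 v. The map f^2 sends [v, z0] over [p, z0] and [d, u0'] over [d, z0]; both
   intervals lie inside their images, so d has f^(2r)-preimages in each of them for every
   r >= 1.  Let x in [u0', v] have odd period k < N = m + 2n.  For k = 1, f^2 would have a
   point in [x, v] sent to d beyond u0'.  For k >= 3, f^k u0' is f d or f z0, which lies
   left of d or right of z0, while f^k x = x; so f^k maps [u0', x] over one of the two
   intervals, and some y in [u0', x] satisfies f^N y = d.  The orbit of x cannot meet the
   2-periodic point z0 = f^2 d unless x = z0 > v, hence y < x <= mu_{m,n}, contradicting
   the minimality of mu_{m,n}. *)

Lemma iter_add (f : R -> R) (n k : nat) (x : R) :
  iter f (n + k) x = iter f n (iter f k x).
Proof. induction n as [|n IH]; simpl; [reflexivity | now rewrite IH]. Qed.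

Lemma iter_mul_period (f : R -> R) (k j : nat) (x : R) :
  iter f k x = x -> iter f (k * j) x = x.
Proof.
  intros Hx; induction j as [|j IH]; [now rewrite Nat.mul_0_r|].
  now rewrite Nat.mul_succ_r, iter_add, Hx, IH.
Qed.

Lemma odd_periodic_eq_of_iter_fixed2 (f : R -> R) (k j : nat) (x q : R) :
  Nat.Odd k -> iter f k x = x -> iter f 2 q = q -> iter f j x = q -> x = q.
Proof.
  intros [i ->] Hx Hq Hj.
  rewrite <- (iter_mul_period f _ j x Hx).
  replace ((2 * i + 1) * j)%nat with (2 * (i * j) + j)%nat by lia.
  rewrite iter_add, Hj; apply iter_mul_period, Hq.
Qed.

Definition clamp (a b x : R) : R := Rmax a (Rmin b x).

Lemma clamp_in (a b x : R) : a <= b -> a <= clamp a b x <= b.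
Proof. intros; unfold clamp, Rmax, Rmin; repeat destruct Rle_dec; lra. Qed.

Lemma clamp_id (a b x : R) : a <= x <= b -> clamp a b x = x.
Proof. intros; unfold clamp, Rmax, Rmin; repeat destruct Rle_dec; lra. Qed.

Lemma clamp_dist (a b x y : R) :
  a <= b -> Rabs (clamp a b y - clamp a b x) <= Rabs (y - x).
Proof.
  intros; unfold clamp, Rmax, Rmin.
  repeat destruct Rle_dec; unfold Rabs; repeat destruct Rcase_abs; lra.
Qed.

(* Clamping extends g from [a, b] to a map continuous on all of R, to which Stdlib's
   intermediate value theorem applies. *)
Lemma continuity_cont_on_clamp (a b : R) (g : R -> R) :
  a <= b -> cont_on a b g -> continuity (fun x => g (clamp a b x)).
Proof.
  intros Hab Hg x0.
  unfold continuity_pt, continue_in, limit1_in, limit_in; simpl; unfold R_dist.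
  intros eps Heps.
  destruct (Hg (clamp a b x0) (clamp_in a b x0 Hab) eps Heps) as [del [Hdel Hclose]].
  exists del; split; [exact Hdel|].
  intros y [_ Hy]; apply Hclose; [now apply clamp_in|].
  eapply Rle_lt_trans; [apply clamp_dist, Hab | exact Hy].
Qed.

Lemma cont_on_const (a b c : R) : cont_on a b (fun _ => c).
Proof.
  intros x _ eps Heps; exists 1; split; [lra|].
  intros; replace (c - c) with 0 by ring; rewrite Rabs_R0; exact Heps.
Qed.

Lemma cont_on_id (a b : R) : cont_on a b (fun x => x).
Proof. intros x _ eps Heps; exists eps; split; [exact Heps | intros; assumption]. Qed.

Lemma cont_on_comp (a b : R) (g h : R -> R) :
  cont_on a b g -> cont_on a b h -> (forall x, a <= x <= b -> a <= h x <= b) ->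
  cont_on a b (fun x => g (h x)).
Proof.
  intros Hg Hh Hmaps x Hx eps Heps.
  destruct (Hg (h x) (Hmaps x Hx) eps Heps) as [dg [Hdg Hg']].
  destruct (Hh x Hx dg Hdg) as [dh [Hdh Hh']].
  exists dh; split; [exact Hdh|].
  intros y Hy Hyx; apply Hg'; [now apply Hmaps | now apply Hh'].
Qed.

Lemma cont_on_ivt (a b : R) (g h : R -> R) (lo hi : R) :
  a <= lo -> lo <= hi -> hi <= b -> cont_on a b g -> cont_on a b h ->
  (g lo <= h lo /\ h hi <= g hi) \/ (h lo <= g lo /\ g hi <= h hi) ->
  exists y, lo <= y <= hi /\ g y = h y.
Proof.
  intros Hlo Hlohi Hhi Hg Hh Hsign.
  set (diff := fun x => g (clamp a b x) - h (clamp a b x)).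
  assert (Hdiff : continuity diff).
  { intro x; apply continuity_pt_minus; apply continuity_cont_on_clamp; auto; lra. }
  destruct (IVT_cor diff lo hi Hdiff Hlohi) as [y [Hy Hy0]].
  - unfold diff; rewrite !clamp_id by lra; destruct Hsign; nra.
  - exists y; split; [exact Hy|].
    unfold diff in Hy0; rewrite clamp_id in Hy0 by lra; lra.
Qed.

Section IntervalMap.

Variables (a b : R) (f : R -> R).
Hypothesis f_cont : cont_on a b f.
Hypothesis f_maps : forall x, a <= x <= b -> a <= f x <= b.

Lemma iter_maps (n : nat) (x : R) : a <= x <= b -> a <= iter f n x <= b.
Proof. revert x; induction n as [|n IH]; intros x Hx; simpl; auto. Qed.

Lemma cont_on_iter (n : nat) : cont_on a b (iter f n).
Proof.
  induction n as [|n IH]; [exact (cont_on_id a b)|].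
  exact (cont_on_comp a b f (iter f n) f_cont IH (iter_maps n)).
Qed.

Lemma iter_ivt (n : nat) (lo hi t : R) :
  a <= lo -> lo <= hi -> hi <= b ->
  iter f n lo <= t <= iter f n hi \/ iter f n hi <= t <= iter f n lo ->
  exists y, lo <= y <= hi /\ iter f n y = t.
Proof.
  intros Hlo Hlohi Hhi Ht.
  apply (cont_on_ivt a b (iter f n) (fun _ => t)); auto using cont_on_iter, cont_on_const.
  simpl; tauto.
Qed.

Lemma iter_ivt_fixpoint (n : nat) (lo hi : R) :
  a <= lo -> lo <= hi -> hi <= b ->
  (lo <= iter f n lo /\ iter f n hi <= hi) \/ (iter f n lo <= lo /\ hi <= iter f n hi) ->
  exists y, lo <= y <= hi /\ iter f n y = y.
Proof.
  intros Hlo Hlohi Hhi Hsign.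
  apply (cont_on_ivt a b (iter f n) (fun y => y)); auto using cont_on_iter, cont_on_id.
  simpl; tauto.
Qed.

Lemma iter_cover (q : nat) (lo hi c e : R) :
  a <= lo -> lo <= hi -> hi <= b -> c <= lo -> hi <= e ->
  (iter f q lo <= c /\ e <= iter f q hi) \/ (iter f q hi <= c /\ e <= iter f q lo) ->
  forall (r : nat) (t : R), c <= t <= e ->
  exists w, lo <= w <= hi /\ iter f (q * S r) w = t.
Proof.
  intros Hlo Hlohi Hhi Hc He Hcov r.
  induction r as [|r IH]; intros t Ht.
  - rewrite Nat.mul_1_r; apply iter_ivt; auto; destruct Hcov; [left|right]; lra.
  - destruct (IH t Ht) as [w' [Hw' Hw't]].
    destruct (iter_ivt q lo hi w') as [w [Hw Hww']]; auto.
    { destruct Hcov; [left|right]; lra. }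
    exists w; split; [exact Hw|].
    now rewrite Nat.mul_succ_r, iter_add, Hww'.
Qed.

Section PreimagesOfD.

Variables (v z0 d u0' : R).
Hypothesis fv2_ge_a : a <= iter f 2 v.
Hypothesis fv_le_b : f v <= b.
Hypothesis fv2_lt_v : iter f 2 v < v.
Hypothesis z0_bounds : v <= z0 < f v.
Hypothesis z0_fix2 : iter f 2 z0 = z0.
Hypothesis z0_first : forall y, v <= y <= z0 -> iter f 2 y = y -> z0 <= y.
Hypothesis d_bounds : iter f 2 v <= d <= v.
Hypothesis d_to_z0 : iter f 2 d = z0.
Hypothesis d_last : forall y, d <= y <= v -> iter f 2 y = z0 -> y <= d.
Hypothesis u0'_bounds : d <= u0' <= v.
Hypothesis u0'_to_d : iter f 2 u0' = d.
Hypothesis u0'_last : forall y, u0' <= y <= v -> iter f 2 y = d -> y <= u0'.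

Lemma v_lt_z0 : v < z0.
Proof.
  destruct (Rle_lt_or_eq_dec _ _ (proj1 z0_bounds)) as [H|H]; [exact H|].
  rewrite <- H in z0_fix2; lra.
Qed.

Lemma z0_le_f_z0 : z0 <= f z0.
Proof.
  destruct (Rle_or_lt z0 (f z0)) as [H|Hlt]; [exact H|].
  destruct (iter_ivt_fixpoint 1 v z0) as [y [Hy Hfy]]; try lra.
  { left; simpl; lra. }
  simpl in Hfy.
  assert (z0 <= y) by (apply z0_first; [lra | simpl; now rewrite !Hfy]).
  replace y with z0 in Hfy by lra; lra.
Qed.

Lemma iter2_lt_on_v_z0 (y : R) : v <= y < z0 -> iter f 2 y < y.
Proof.
  intros Hy; destruct (Rlt_or_le (iter f 2 y) y) as [H|H]; [exact H|].
  destruct (iter_ivt_fixpoint 2 v y) as [w [Hw Hfw]]; try lra.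
  assert (z0 <= w) by (apply z0_first; [lra | exact Hfw]); lra.
Qed.

Lemma iter2_lt_z0_on_d_v (y : R) : d < y <= v -> iter f 2 y < z0.
Proof.
  intros Hy; destruct (Rlt_or_le (iter f 2 y) z0) as [H|H]; [exact H|].
  destruct (iter_ivt 2 y v z0) as [w [Hw Hfw]]; try lra.
  assert (w <= d) by (apply d_last; [lra | exact Hfw]); lra.
Qed.

(* Both cases come down to f^2 (f d) = f z0 >= z0. *)
Lemma f_d_outside : f d <= d \/ z0 <= f d.
Proof.
  assert (Hfd : iter f 2 (f d) = f z0) by (rewrite <- d_to_z0; reflexivity).
  pose proof z0_le_f_z0 as Hz0.
  destruct (Rle_or_lt (f d) d) as [H|Hd]; [now left | right].
  destruct (Rle_or_lt z0 (f d)) as [H|Hlt]; [exact H | exfalso].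
  destruct (Rle_or_lt (f d) v) as [Hv|Hv].
  - pose proof (iter2_lt_z0_on_d_v (f d) (conj Hd Hv)); lra.
  - pose proof (iter2_lt_on_v_z0 (f d) (conj (Rlt_le _ _ Hv) Hlt)); lra.
Qed.

Lemma d_lt_u0' : d < u0'.
Proof.
  pose proof v_lt_z0.
  assert (u0' <> d) by (intro E; rewrite E in u0'_to_d; lra); lra.
Qed.

Lemma iter_odd_u0'_outside (k : nat) :
  Nat.Odd k -> (3 <= k)%nat -> iter f k u0' <= d \/ z0 <= iter f k u0'.
Proof.
  intros [j ->] Hk.
  destruct j as [|[|j]]; [lia | |].
  - replace (2 * 1 + 1)%nat with (1 + 2)%nat by lia.
    rewrite iter_add, u0'_to_d; exact f_d_outside.
  - right; replace (2 * S (S j) + 1)%nat with (1 + 2 * j + 2 + 2)%nat by lia.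
    rewrite !iter_add, u0'_to_d, d_to_z0, iter_mul_period by exact z0_fix2.
    exact z0_le_f_z0.
Qed.

Lemma no_2periodic_on_u0'_v (x : R) : u0' <= x <= v -> iter f 2 x <> x.
Proof.
  intros Hx Hfx; pose proof d_lt_u0'.
  destruct (iter_ivt 2 x v d) as [y [Hy Hfy]]; try lra.
  assert (y <= u0') by (apply u0'_last; [lra | exact Hfy]).
  replace y with x in Hfy by lra; lra.
Qed.

Lemma odd_periodic_point_has_earlier_preimage (N k : nat) (x : R) :
  Nat.Odd N -> Nat.Odd k -> (k < N)%nat -> u0' <= x <= v -> iter f k x = x ->
  exists y, u0' <= y < x /\ iter f N y = d.
Proof.
  intros HN Hk HkN Hx Hper.
  pose proof v_lt_z0; pose proof d_lt_u0'.
  assert (Hk3 : (3 <= k)%nat).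
  { destruct Hk as [j Hj]; destruct (Nat.eq_dec k 1) as [->|]; [exfalso | lia].
    exact (no_2periodic_on_u0'_v x Hx (iter_mul_period f 1 2 x Hper)). }
  assert (HNk : exists r, N = (2 * S r + k)%nat).
  { destruct HN as [i Hi], Hk as [j Hj]; exists (i - j - 1)%nat; lia. }
  destruct HNk as [r ->].
  assert (Hw : exists w, (iter f k u0' <= w <= x \/ x <= w <= iter f k u0') /\
                         iter f (2 * S r) w = d).
  { destruct (iter_odd_u0'_outside k Hk Hk3) as [Hc|Hc].
    - destruct (iter_cover 2 d u0' d z0) with (r := r) (t := d) as [w [Hw Hfw]];
        try lra.
      exists w; split; [left; lra | exact Hfw].
    - destruct (iter_cover 2 v z0 (iter f 2 v) z0) with (r := r) (t := d)
        as [w [Hw Hfw]]; try lra.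
      exists w; split; [right; lra | exact Hfw]. }
  destruct Hw as [w [Hw Hfw]].
  destruct (iter_ivt k u0' x w) as [y [Hy Hfy]]; try lra.
  assert (Hyd : iter f (2 * S r + k) y = d) by (rewrite iter_add, Hfy; exact Hfw).
  exists y; split; [split; [lra|] | exact Hyd].
  destruct (Rle_lt_or_eq_dec y x (proj2 Hy)) as [Hlt|<-]; [exact Hlt | exfalso].
  assert (y = z0); [|lra].
  apply (odd_periodic_eq_of_iter_fixed2 f k (2 + (2 * S r + k)) y z0 Hk Hper z0_fix2).
  now rewrite iter_add, Hyd.
Qed.

End PreimagesOfD.

End IntervalMap.

Theorem lemma9 (a b : R) (f : R -> R) (m : nat) (p v z z0 d u1 u0' : R)
  (mu : nat -> R) :
  a <= b ->
  cont_on a b f ->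
  (forall x, a <= x <= b -> a <= f x <= b) ->
  Nat.Odd m -> (3 <= m)%nat ->
  (* p = min P, where P is the orbit of p, of least period m *)
  a <= p <= b ->
  least_period f m p ->
  (forall i : nat, p <= iter f i p) ->
  (* e = f^(m-1)(min P) *)
  p <= v < iter f (m - 1) p ->
  f v = iter f (m - 1) p ->
  v < z < iter f (m - 1) p ->
  f z = z ->
  is_min_of (fun x => v <= x <= z /\ iter f 2 x = x) z0 ->
  is_max_of (fun x => p <= x <= v /\ iter f 2 x = z0) d ->
  is_min_of (fun x => d <= x <= v /\ iter f 2 x = d) u1 ->
  is_max_of (fun x => u1 <= x <= v /\ iter f 2 x = d) u0' ->
  (forall n : nat, (1 <= n)%nat ->
     is_min_of (fun x => u0' <= x <= v /\ iter f (m + 2 * n) x = d) (mu n)) ->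
  forall n : nat, (1 <= n)%nat ->
  forall (x : R) (k : nat),
    u0' <= x <= mu n ->
    least_period f k x ->
    Nat.Odd k ->
    (m + 2 * n <= k)%nat.
Proof.
  intros _ Hc Hmaps Hmodd Hm3 Hp [_ [Hpm Hpmin]] _ Hv Hfv Hz _ [[Hz0 Hz0fix] Hz0min]
    [[Hd Hdz0] Hdmax] [[Hu1 _] _] [[Hu0' Hu0'd] Hu0'max] Hmu n Hn x k Hx
    [_ [Hkx _]] Hk.
  set (e := iter f (m - 1) p) in *.
  assert (Hfe : f e = p) by (unfold e; replace m with (S (m - 1)) in Hpm by lia; exact Hpm).
  assert (Hfv2 : iter f 2 v = p) by (simpl; rewrite Hfv; exact Hfe).
  assert (He : a <= e <= b) by (apply (iter_maps a b f Hmaps); exact Hp).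
  assert (Hpv : p < v).
  { destruct (Rle_lt_or_eq_dec _ _ (proj1 Hv)) as [H|H]; [exact H | exfalso].
    apply (Hpmin 2%nat); [lia | rewrite H, Hfv2; exact H]. }
  assert (HN : Nat.Odd (m + 2 * n)) by (destruct Hmodd as [i ->]; exists (i + n)%nat; lia).
  destruct (Nat.le_gt_cases (m + 2 * n) k) as [|HkN]; [assumption | exfalso].
  destruct (Hmu n Hn) as [[Hmu_lo _] Hmu_min].
  edestruct (odd_periodic_point_has_earlier_preimage a b f Hc Hmaps v z0 d u0')
    with (N := (m + 2 * n)%nat) (k := k) (x := x) as [y [Hy Hyd]];
    try rewrite Hfv2; try rewrite Hfv; try eassumption; try lra.
  - intros y Hy Hfy; apply Hz0min; split; [lra | exact Hfy].
  - intros y Hy Hfy; apply Hdmax; split; [lra | exact Hfy].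
  - intros y Hy Hfy; apply Hu0'max; split; [lra | exact Hfy].
  - assert (mu n <= y) by (apply Hmu_min; split; [lra | exact Hyd]); lra.
Qed.
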